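(* Let $p$ be an odd prime, $q$ a power of $p$, and $n$ a nonnegative even integer with $p\nmid n$. If $F_n(1,x)$ is a permutation polynomial of $\mathbb{F}_q$, then $n\equiv 0\pmod 4$ and $\gcd\!\left(\lfloor\frac{n-1}{2}\rfloor,\,q-1\right)=1$.
   Context: For an integer $n\ge 1$, the $n$-th reversed Dickson polynomial of the third kind is $F_n(a,x)=\sum_{i=0}^{\lfloor n/2\rfloor}\frac{n-2i}{n-i}\binom{n-i}{i}(-x)^i a^{n-2i}$, where each coefficient $\frac{n-2i}{n-i}\binom{n-i}{i}$ is an integer (read in $\mathbb{F}_q$), and $F_0(a,x)=0$. A polynomial $f\in\mathbb{F}_q[x]$ is a permutation polynomial of $\mathbb{F}_q$ if $c\mapsto f(c)$ is a bijection of $\mathbb{F}_q$. *)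

From HB Require Import structures.
From mathcomp Require Import all_boot all_order all_algebra all_field.
Set Implicit Arguments. Unset Strict Implicit. Unset Printing Implicit Defensive.
Import GRing.Theory.
Local Open Scope ring_scope.

(* The integer coefficient (n-2i)/(n-i) * C(n-i, i), computed as an exact
   natural-number division (n - i >= 1 whenever n >= 1 and i <= n/2). *)
Definition rdt_coef (n i : nat) : nat :=
  ((n - i.*2) * 'C(n - i, i) %/ (n - i))%N.

Definition rev_dickson3 (R : nzRingType) (n : nat) (a : R) : {poly R} :=
  if n == 0%N then 0
  else \sum_(i < n./2.+1)
         ((rdt_coef n i)%:R * a ^+ (n - i.*2)) *: (- 'X) ^+ i.

Definition is_perm_poly (F : finFieldType) (f : {poly F}) : Prop :=
  bijective (fun c : F => f.[c]).

(* For n = 2(d+1) one has F_n(1,x) = E_{2d+1}(1,x), and the reciprocity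
   (1-4x)^d E_{2d+1}(1, -x/(1-4x)) = E_{2d+1}(1,x) shows that x and
   x' = -x/(1-4x) take the same value whenever x is a root or (1-4x)^d = 1.
   For a permutation polynomial this forces x' = x, i.e. x = 0 or x = 1/2.
   Applied to the root of F_n, the values E_N(1,0) = 1, 2^N E_N(1,1/4) = N+1
   and 4^j E_{4j+1}(1,1/2) = (-1)^j leave only d odd, i.e. 4 | n.  Applied to
   x = (1-z)/4 for a d-th root of unity z != 1 it gives z = -1, impossible for
   odd d; hence gcd(d, q-1) = 1. *)

From HB Require Import structures.
From mathcomp Require Import all_boot all_algebra all_field.
From mathcomp Require Import fingroup pgroup.
From mathcomp Require Import ring zify.
Set Implicit Arguments. Unset Strict Implicit. Unset Printing Implicit Defensive.
Import GRing.Theory.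
Local Open Scope ring_scope.

Section LinearRecurrence.
Variable F : fieldType.
Implicit Types (x a b : F) (N : nat).

Fixpoint lrec x a b N : F :=
  match N with
  | 0%N => a
  | 1%N => b
  | S (S N' as M) => lrec x a b M - x * lrec x a b N'
  end.

(* The reversed Dickson polynomials E_N(1,x) and D_N(1,x) of the second and
   first kind. *)
Definition revE x := lrec x 1 1.
Definition revD x := lrec x 2 1.

Lemma lrecSS x a b N : lrec x a b N.+2 = lrec x a b N.+1 - x * lrec x a b N.
Proof. by []. Qed.

Lemma eq_lrec x (f g : nat -> F) :
  (forall N, f N.+2 = f N.+1 - x * f N) -> (forall N, g N.+2 = g N.+1 - x * g N) ->
  f 0%N = g 0%N -> f 1%N = g 1%N -> f =1 g.
Proof.
move=> recf recg f0 f1.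
suff fg N : f N = g N /\ f N.+1 = g N.+1 by move=> N; case: (fg N).
elim: N => [|N [eN eSN]]; first by [].
by split=> //; rewrite recf recg eN eSN.
Qed.

Lemma revESS x N : revE x N.+2 = revD x N.+2 + x * revE x N.
Proof.
apply: (@eq_lrec x (fun N => revE x N.+2) (fun N => revD x N.+2 + x * revE x N)).
- by move=> M; rewrite /revE !lrecSS; ring.
- by move=> M; rewrite /revE /revD !lrecSS; ring.
- by rewrite /revE /revD /=; ring.
- by rewrite /revE /revD /=; ring.
Qed.

Lemma revDSS x N : revD x N.+2 = (1 - 4 * x) * revE x N + x * revD x N.
Proof.
apply: (@eq_lrec x (fun N => revD x N.+2) (fun N => (1 - 4 * x) * revE x N + x * revD x N)).
- by move=> M; rewrite /revD !lrecSS; ring.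
- by move=> M; rewrite /revE /revD !lrecSS; ring.
- by rewrite /revE /revD /=; ring.
- by rewrite /revE /revD /=; ring.
Qed.

Lemma revE_reciprocal x k : 1 - 4 * x != 0 ->
  revE (- x / (1 - 4 * x)) k.*2.+1 * (1 - 4 * x) ^+ k = revE x k.*2.+1.
Proof.
set s := 1 - 4 * x; set x' := - x / s => s_neq0.
have x's : x' * s = - x by rewrite /x' divfK.
suff recip j : revE x' j.*2 * s ^+ j = revD x j.*2.+1 /\
               revE x' j.*2.+1 * s ^+ j = revE x j.*2.+1 by case: (recip k).
elim: j => [|j [even_j odd_j]]; first by rewrite /revE /revD /= !mulr1.
have even_Sj : revE x' j.+1.*2 * s ^+ j.+1 = revD x j.+1.*2.+1.
  rewrite doubleS /revE lrecSS -/(revE x' _) exprS.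
  transitivity ((revE x' j.*2.+1 * s ^+ j) * s - (x' * s) * (revE x' j.*2 * s ^+ j)).
    by rewrite /revE; ring.
  by rewrite even_j odd_j x's revDSS -/s; ring.
split=> //.
rewrite doubleS /revE lrecSS -!/(revE _ _) -doubleS exprS.
transitivity (revE x' j.+1.*2 * s ^+ j.+1 - (x' * s) * (revE x' j.*2.+1 * s ^+ j)).
  by rewrite exprS; ring.
by rewrite even_Sj odd_j x's doubleS revESS; ring.
Qed.

Lemma revE0 N : revE 0 N = 1.
Proof.
by apply: (@eq_lrec 0 (revE 0) (fun=> 1)) => // M; rewrite /revE /= mul0r subr0.
Qed.

Lemma revE_quarter x N : 4 * x = 1 -> 2 ^+ N * revE x N = N.+1%:R.
Proof.
move=> x4.
suff E_N : 2 ^+ N * revE x N = N.+1%:R /\ 2 ^+ N.+1 * revE x N.+1 = N.+2%:R.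
  by case: E_N.
elim: N => [|N [E_N E_SN]]; first by rewrite /revE /=; split; ring.
split=> //.
transitivity (2 * (2 ^+ N.+1 * revE x N.+1) - (4 * x) * (2 ^+ N * revE x N)).
  by rewrite /revE lrecSS !exprS; ring.
by rewrite E_N E_SN x4 !mulrSr; ring.
Qed.

Lemma revE_half x j : 2 * x = 1 -> 4 ^+ j * revE x (4 * j).+1 = (-1) ^+ j.
Proof.
move=> x2; elim: j => [|j IHj]; first by rewrite /revE /= mulr1.
have E4 N : 4 * revE x N.+4 = - revE x N.
  transitivity (4 * (1 - 2 * x) * revE x N.+1 + ((2 * x) ^+ 2 - 2 * (2 * x)) * revE x N).
    by rewrite /revE !lrecSS; ring.
  by rewrite x2 subrr; ring.
have -> : (4 * j.+1).+1 = ((4 * j).+1).+4 by lia.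
by rewrite exprS -mulrA mulrCA E4 mulrN IHj exprS mulN1r.
Qed.

Definition binsum K N x := \sum_(i < K) ('C(N - i, i))%:R * (- x) ^+ i.

Lemma binsum_widen K1 K2 N x : (N./2 < K1)%N -> (K1 <= K2)%N ->
  binsum K2 N x = binsum K1 N x.
Proof.
move=> N_K1 K12; rewrite /binsum.
rewrite (big_ord_widen K2 (fun i : nat => ('C(N - i, i))%:R * (- x) ^+ i) K12).
rewrite [RHS]big_mkcond /=.
apply: eq_bigr => i _; case: ifP => // /negbT; rewrite -leqNgt => K1_i.
by rewrite bin_small ?mul0r //; move: (odd_double_half N); lia.
Qed.

Lemma binsum_rec K N x : (N./2 < K)%N ->
  binsum K.+1 N.+2 x = binsum K.+1 N.+1 x - x * binsum K.+1 N x.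
Proof.
move=> N_K; rewrite [binsum K.+1 N x](binsum_widen _ N_K) // /binsum.
rewrite !big_ord_recl /= !subn0 !bin0.
have pascal (i : 'I_K) :
    ('C(N.+2 - bump 0 i, bump 0 i))%:R * (- x) ^+ bump 0 i =
    ('C(N.+1 - bump 0 i, bump 0 i))%:R * (- x) ^+ bump 0 i
      + (- x) * (('C(N - i, i))%:R * (- x) ^+ i) :> F.
  rewrite /bump /= add1n subSS exprS.
  have -> : 'C(N.+1 - i, i.+1) = ('C(N - i, i.+1) + 'C(N - i, i))%N.
    case: (leqP i N) => [iN|Ni]; first by rewrite subSn // binS.
    by rewrite !bin_small //; lia.
  by rewrite natrD; ring.
rewrite (eq_bigr _ (fun i _ => pascal i)) big_split /= -mulr_sumr; ring.
Qed.

Lemma revE_binsum x N : revE x N = binsum N.+1 N x.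
Proof.
have half_lt M : (M./2 < M.+1)%N by move: (odd_double_half M); lia.
apply: (@eq_lrec x (revE x) (fun N => binsum N.+1 N x)) => [M|M||].
- by rewrite /revE lrecSS.
- rewrite binsum_rec; last exact: leq_trans (half_lt M) (leqnSn _).
  rewrite (@binsum_widen M.+2 M.+3 M.+1) ?half_lt //.
  by rewrite (@binsum_widen M.+1 M.+3 M) ?half_lt //; exact: leq_trans (leqnSn _) (leqnSn _).
- by rewrite /binsum big_ord_recl big_ord0 /= mulr1 addr0.
- by rewrite /binsum !big_ord_recl big_ord0 /bump /= bin0 bin0n mul0r !addr0 mulr1.
Qed.

End LinearRecurrence.

Lemma rdt_coefE n i : (i < n)%N -> rdt_coef n i = 'C(n.-1 - i, i).
Proof.
move=> i_lt_n; rewrite /rdt_coef.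
have -> : (n - i.*2 = (n - i) - i)%N by rewrite -addnn; lia.
have -> : (n.-1 - i = (n - i).-1)%N by lia.
by rewrite -mul_bin_down mulKn //; lia.
Qed.

Lemma horner_rev_dickson3_double (F : fieldType) d (x : F) :
  (rev_dickson3 d.+1.*2 1).[x] = revE x d.*2.+1.
Proof.
rewrite /rev_dickson3 /= horner_sum doubleK revE_binsum.
rewrite (@binsum_widen _ d.+2 d.*2.+2); last by rewrite -addnn; lia.
  apply: eq_bigr => i _; rewrite !hornerE expr1n mulr1 rdt_coefE.
    by rewrite doubleS.
  by move: (ltn_ord i); rewrite -addnn; lia.
by rewrite /= uphalf_double.
Qed.

Lemma revE_inj_reciprocal_fixed (F : fieldType) d (x : F) :
  2 != 0 :> F -> injective (fun c : F => revE c d.*2.+1) -> 1 - 4 * x != 0 ->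
  revE x d.*2.+1 * (1 - 4 * x) ^+ d = revE x d.*2.+1 -> x = 0 \/ 2 * x = 1.
Proof.
set s := 1 - 4 * x => two_neq0 E_inj s_neq0 Es.
have fixed : - x / s = x.
  apply: E_inj; apply: (mulIf (expf_neq0 d s_neq0)).
  by rewrite /= revE_reciprocal // Es.
have xs : x * s = - x by rewrite -{1}fixed divfK.
have : 2 * (x * (1 - 2 * x)) = 0 by rewrite -(addNr x) -xs /s; ring.
move/eqP; rewrite !mulf_eq0 (negbTE two_neq0) subr_eq0 /=.
by case/orP=> [/eqP | /eqP/esym]; [left | right].
Qed.

Lemma revE_inj_odd (F : fieldType) d (x0 : F) :
  2 != 0 :> F -> d.+1.*2%:R != 0 :> F -> injective (fun c : F => revE c d.*2.+1) ->
  revE x0 d.*2.+1 = 0 -> odd d.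
Proof.
move=> two_neq0 n_neq0 E_inj Ex0; apply: contraT => d_even.
have s_neq0 : 1 - 4 * x0 != 0.
  apply: contra n_neq0; rewrite subr_eq0 eq_sym => /eqP/(revE_quarter d.*2.+1).
  by rewrite Ex0 mulr0 doubleS => <-.
have [x0_eq0|x0_half] : x0 = 0 \/ 2 * x0 = 1.
  by apply: (revE_inj_reciprocal_fixed two_neq0 E_inj s_neq0); rewrite Ex0 mul0r.
  by move: Ex0; rewrite x0_eq0 revE0 => /eqP; rewrite oner_eq0.
have d_quarter : (4 * d./2 = d.*2)%N by move: (even_halfK d_even); lia.
move: (revE_half d./2 x0_half).
by rewrite d_quarter Ex0 mulr0 => /esym/eqP; rewrite signr_eq0.
Qed.

Lemma revE_inj_root_of_unity (F : fieldType) d (z : F) :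
  2 != 0 :> F -> odd d -> injective (fun c : F => revE c d.*2.+1) ->
  z ^+ d = 1 -> z = 1.
Proof.
move=> two_neq0 d_odd E_inj zd.
have four_eq : 4 = 2 * 2 :> F by rewrite -natrM.
have four_neq0 : 4 != 0 :> F by rewrite four_eq mulf_neq0.
set x := (1 - z) / 4.
have s_eq : 1 - 4 * x = z by rewrite /x mulrC divfK // opprB addrC subrK.
have z_neq0 : z != 0.
  apply/eqP => z0; move: zd; rewrite z0 expr0n gtn_eqF ?odd_gt0 //= => /eqP.
  by rewrite eq_sym oner_eq0.
have [x_eq0|x_half] : x = 0 \/ 2 * x = 1.
  by apply: (revE_inj_reciprocal_fixed two_neq0 E_inj); rewrite s_eq // zd mulr1.
  by rewrite -s_eq x_eq0 mulr0 subr0.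
have z_eqN1 : z = -1 by rewrite -s_eq four_eq -mulrA x_half; ring.
move: zd; rewrite z_eqN1 -signr_odd d_odd expr1 => /eqP.
by rewrite eq_sym -addr_eq0 -mulr2n (negbTE two_neq0).
Qed.

Lemma exists_root_of_unity_neq1 (F : finFieldType) d :
  gcdn d #|F|.-1 != 1%N -> exists2 z : F, z ^+ d = 1 & z != 1.
Proof.
set G := gcdn d #|F|.-1 => G_neq1.
have units_gt0 : (0 < #|F|.-1)%N.
  by rewrite -card_finField_unit (cardG_gt0 [set: {unit F}]%G).
have G_gt1 : (1 < G)%N by rewrite ltn_neqAle eq_sym G_neq1 gcdn_gt0 units_gt0 orbT.
have l_prime : prime (pdiv G) by apply: pdiv_prime.
have l_dvd_d : (pdiv G %| d)%N := dvdn_trans (pdiv_dvd G) (dvdn_gcdl _ _).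
have l_dvd_units : (pdiv G %| #|[set: {unit F}]%G|)%N.
  by rewrite card_finField_unit (dvdn_trans (pdiv_dvd G) (dvdn_gcdr _ _)).
have [u _ u_order] := Cauchy l_prime l_dvd_units.
exists (FinRing.uval u).
  case/dvdnP: l_dvd_d => t ->.
  by rewrite -FinRing.val_unitX mulnC expgM -u_order expg_order expg1n.
apply: contraTneq l_prime => u1.
have u_eq1 : u = 1%g by apply: val_inj.
by rewrite -u_order u_eq1 order1.
Qed.

Theorem theorem3p3 (F : finFieldType) (p n : nat) :
  prime p -> odd p -> p \in [pchar F] ->
  ~~ odd n -> ~~ (p %| n)%N ->
  is_perm_poly (rev_dickson3 n (1 : F)) ->
  (4 %| n)%N /\ gcdn (n.-1)./2 (#|F|.-1) = 1%N.
Proof.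
move=> p_prime p_odd p_char n_even p_ndvd_n [g Fn_g g_Fn].
have Fn_inj := can_inj Fn_g.
have two_neq0 : 2 != 0 :> F.
  by rewrite -(dvdn_pcharf p_char) (dvdn_prime2 p_prime) //; apply: contraTneq p_odd => ->.
have [d n_eq] : exists d, n = d.+1.*2.
  move: Fn_inj; rewrite -(even_halfK n_even); case: n./2 => [|d _]; last by exists d.
  move=> /(_ 0 1); rewrite /rev_dickson3 /= !horner0 => /(_ erefl) /eqP.
  by rewrite eq_sym oner_eq0.
have E_inj : injective (fun c : F => revE c d.*2.+1).
  by move=> x y Exy; apply: Fn_inj; rewrite /= n_eq !horner_rev_dickson3_double.
have d_odd : odd d.
  apply: (revE_inj_odd (x0 := g 0)) => //.
    by rewrite -n_eq -(dvdn_pcharf p_char).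
  by rewrite -horner_rev_dickson3_double -n_eq g_Fn.
split; first by rewrite n_eq; move: (odd_double_half d); rewrite d_odd; lia.
have -> : (n.-1)./2 = d by rewrite n_eq doubleS /= uphalf_double.
apply/eqP; apply: contraT => /exists_root_of_unity_neq1 [z zd].
by rewrite (revE_inj_root_of_unity two_neq0 d_odd E_inj zd) eqxx.
Qed.
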